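(* Let $\mathcal{N}$ denote the non-classicality of a temporal KD distribution. Fix the channels $\mathcal{E}_{t_j\leftarrow t_{j-1}}$ and the measurements, and regard the right temporal KD distribution $\overrightarrow{Q}_{\rm KD}[\rho_{t_0}]$ as a function of the initial density operator. Then for all density operators $\rho_{t_0},\omega_{t_0}$ and $\lambda\in[0,1]$, $$\mathcal{N}\big[\overrightarrow{Q}_{\rm KD}[\lambda\rho_{t_0}+(1-\lambda)\omega_{t_0}]\big]\le\lambda\,\mathcal{N}\big[\overrightarrow{Q}_{\rm KD}[\rho_{t_0}]\big]+(1-\lambda)\,\mathcal{N}\big[\overrightarrow{Q}_{\rm KD}[\omega_{t_0}]\big].$$ The same holds for the left and doubled temporal KD distributions.
   Context: A multi-time quantum process $(\rho_{t_0},\mathcal{E}_{t_1\leftarrow t_0},\dots,\mathcal{E}_{t_n\leftarrow t_{n-1}})$ consists of a density operator and CPTP maps on finite-dimensional spaces, extended linearly to all operators; complete families of orthogonal projectors are fixed at each time. $\overrightarrow{Q}_{\rm KD}(b_n,\dots,b_0)=\operatorname{Tr}[\mathcal{E}_{t_n\leftarrow t_{n-1}}(\cdots\mathcal{E}_{t_1\leftarrow t_0}(\rho_{t_0}\Pi^{t_0}_{b_0})\Pi^{t_1}_{b_1}\cdots)\Pi^{t_n}_{b_n}]$; $\overleftarrow{Q}_{\rm KD}(a_n,\dots,a_0)=\operatorname{Tr}[\Pi^{t_n}_{a_n}\mathcal{E}_{t_n\leftarrow t_{n-1}}(\cdots\Pi^{t_1}_{a_1}\mathcal{E}_{t_1\leftarrow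 t_0}(\Pi^{t_0}_{a_0}\rho_{t_0})\cdots)]$; $\overleftrightarrow{Q}_{\rm KD}(a;b)=\operatorname{Tr}[\Pi^{t_n}_{a_n}\mathcal{E}_{t_n\leftarrow t_{n-1}}(\cdots\Pi^{t_1}_{a_1}\mathcal{E}_{t_1\leftarrow t_0}(\Pi^{t_0}_{a_0}\rho_{t_0}\Pi^{t_0}_{b_0})\Pi^{t_1}_{b_1}\cdots)\Pi^{t_n}_{b_n}]$. For any such (complex-valued) distribution $Q$, $\mathcal{N}[Q]=\sum_{\text{all outcomes}}|Q|-1$. *)

(* Complex numbers are  R[i]  (mathcomp-real-closed
   [complex]) for an arbitrary  R : realType,  so  R[i]  is  C  when R = reals. *)
From mathcomp Require Import all_boot all_order all_algebra.
From mathcomp Require Import complex.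
From mathcomp Require Import reals.

Set Implicit Arguments.
Unset Strict Implicit.
Unset Printing Implicit Defensive.

Import Order.TTheory GRing.Theory Num.Theory.
Local Open Scope ring_scope.

Section QuantumKD.
Variable R : realType.
Local Notation C := (R[i]).

Definition adjmx m n (A : 'M[C]_(m, n)) : 'M[C]_(n, m) := (map_mx Num.conj A)^T.

(* positive semidefinite operator:  <w|A|w> >= 0 for every vector w
   (over C this entails hermiticity). *)
Definition psdmx d (A : 'M[C]_d) : Prop :=
  forall v : 'rV[C]_d, 0 <= (v *m A *m adjmx v) ord0 ord0.

(* positivity of a k x k block operator (A p q) on C^k (x) C^d *)
Definition blockpsd k d (A : 'I_k -> 'I_k -> 'M[C]_d) : Prop :=
  forall v : 'I_k -> 'rV[C]_d,
    0 <= \sum_(p < k) \sum_(q < k) (v p *m A p q *m adjmx (v q)) ord0 ord0.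

(* complete positivity: id_k (x) E is positive for every k *)
Definition completely_positive d d' (E : 'M[C]_d -> 'M[C]_d') : Prop :=
  forall k (A : 'I_k -> 'I_k -> 'M[C]_d),
    blockpsd A -> blockpsd (fun p q => E (A p q)).

Definition trace_preserving d d' (E : 'M[C]_d -> 'M[C]_d') : Prop :=
  forall A, \tr (E A) = \tr A.

Definition density d (rho : 'M[C]_d) : Prop := psdmx rho /\ \tr rho = 1.

Definition proj_family (O : finType) d (P : O -> 'M[C]_d) : Prop :=
  [/\ forall b, P b *m P b = P b,
      forall b, adjmx (P b) = P b,
      forall a b, a != b -> P a *m P b = 0
    & \sum_(b : O) P b = 1%:M].

(* ---------- multi-time process data ----------
   n : number of channels; times t_0,...,t_n
   d j : Hilbert space dimension at time t_j
   O j : outcome set at time t_j;  Pi j b : projector Pi^{t_j}_b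
   E j : the linear map E_{t_{j+1} <- t_j}  (used for j < n)            *)
Variables (n : nat) (d : nat -> nat) (O : nat -> finType).
Variable Pi : forall j, O j -> 'M[C]_(d j).
Variable E : forall j, {linear 'M[C]_(d j) -> 'M[C]_(d j.+1)}.

Definition outcomes := {dffun forall j : 'I_n.+1, O j}.

Definition process_ok : Prop :=
  (forall j, (j <= n)%N -> proj_family (Pi (j := j))) /\
  (forall j, (j < n)%N ->
     completely_positive (E j) /\ trace_preserving (E j)).

Section States.
Variable rho : 'M[C]_(d 0).

Fixpoint rstate (b : outcomes) (j : nat) : (j < n.+1)%N -> 'M[C]_(d j) :=
  match j with
  | 0 => fun H => rho *m Pi (b (Ordinal H))
  | j'.+1 => fun H => E j' (rstate b (ltnW H)) *m Pi (b (Ordinal H))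
  end.

Fixpoint lstate (a : outcomes) (j : nat) : (j < n.+1)%N -> 'M[C]_(d j) :=
  match j with
  | 0 => fun H => Pi (a (Ordinal H)) *m rho
  | j'.+1 => fun H => Pi (a (Ordinal H)) *m E j' (lstate a (ltnW H))
  end.

Fixpoint dstate (a b : outcomes) (j : nat) : (j < n.+1)%N -> 'M[C]_(d j) :=
  match j with
  | 0 => fun H => Pi (a (Ordinal H)) *m rho *m Pi (b (Ordinal H))
  | j'.+1 => fun H =>
      Pi (a (Ordinal H)) *m E j' (dstate a b (ltnW H)) *m Pi (b (Ordinal H))
  end.

Definition QKD_right (b : outcomes) : C := \tr (rstate b (ltnSn n)).
Definition QKD_left (a : outcomes) : C := \tr (lstate a (ltnSn n)).
Definition QKD_doubled (ab : outcomes * outcomes) : C :=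
  \tr (dstate ab.1 ab.2 (ltnSn n)).
End States.

Definition nonclass (T : finType) (Q : T -> C) : C := \sum_(x : T) `|Q x| - 1.

End QuantumKD.

Arguments QKD_right {R} n {d O} Pi E rho b.
Arguments QKD_left {R} n {d O} Pi E rho a.
Arguments QKD_doubled {R} n {d O} Pi E rho ab.

(* The three temporal KD distributions are linear functions of the initial
   state, because every map in their definition (multiplication by a
   projector, the channels, the trace) is linear.  Hence a mixture of initial
   states yields the same mixture of quasi-probabilities, and the triangle
   inequality for [|.|], summed over all outcomes, makes the total absolute
   quasi-probability, and with it the non-classicality, convex. *)
From mathcomp Require Import all_boot all_order all_algebra.
From mathcomp Require Import complex.
From mathcomp Require Import reals.
From mathcomp Require Import ring.
Import Order.TTheory GRing.Theory Num.Theory.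
Local Open Scope ring_scope.

Lemma sum_norm_convex (K : numDomainType) (T : finType) (f g : T -> K) (lam : K) :
  0 <= lam <= 1 ->
  \sum_x `|lam * f x + (1 - lam) * g x|
    <= lam * \sum_x `|f x| + (1 - lam) * \sum_x `|g x|.
Proof.
move=> /andP[lam_ge0 lam_le1].
have lamC_ge0 : 0 <= 1 - lam by rewrite subr_ge0.
rewrite !mulr_sumr -big_split /=; apply: ler_sum => x _.
by rewrite (le_trans (ler_normD _ _)) // !normrM (ger0_norm lam_ge0) (ger0_norm lamC_ge0).
Qed.

Lemma nonclass_convex (R : realType) (T : finType) (Q Q1 Q2 : T -> R[i])
    (lam : R[i]) :
  0 <= lam <= 1 -> (forall x, Q x = lam * Q1 x + (1 - lam) * Q2 x) ->
  nonclass Q <= lam * nonclass Q1 + (1 - lam) * nonclass Q2.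
Proof.
move=> lam01 defQ; rewrite /nonclass.
under eq_bigr => x _ do rewrite defQ.
have -> : lam * (\sum_x `|Q1 x| - 1) + (1 - lam) * (\sum_x `|Q2 x| - 1)
          = lam * \sum_x `|Q1 x| + (1 - lam) * \sum_x `|Q2 x| - 1 by ring.
by rewrite lerD2r sum_norm_convex.
Qed.

Section KDLinearity.
Variable R : realType.
Variables (n : nat) (d : nat -> nat) (O : nat -> finType).
Variable Pi : forall j, O j -> 'M[R[i]]_(d j).
Variable E : forall j, {linear 'M[R[i]]_(d j) -> 'M[R[i]]_(d j.+1)}.
Variables (a c : R[i]) (rho omega : 'M[R[i]]_(d 0)).

Lemma rstate_comb b j (lt_jn : (j < n.+1)%N) :
  rstate Pi E (a *: rho + c *: omega) b lt_jn =
  a *: rstate Pi E rho b lt_jn + c *: rstate Pi E omega b lt_jn.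
Proof.
elim: j lt_jn => [|j IHj] lt_jn /=; first by rewrite mulmxDl !scalemxAl.
by rewrite IHj linearP linearZ /= mulmxDl !scalemxAl.
Qed.

Lemma lstate_comb b j (lt_jn : (j < n.+1)%N) :
  lstate Pi E (a *: rho + c *: omega) b lt_jn =
  a *: lstate Pi E rho b lt_jn + c *: lstate Pi E omega b lt_jn.
Proof.
elim: j lt_jn => [|j IHj] lt_jn /=; first by rewrite mulmxDr !scalemxAr.
by rewrite IHj linearP linearZ /= mulmxDr !scalemxAr.
Qed.

Lemma dstate_comb x y j (lt_jn : (j < n.+1)%N) :
  dstate Pi E (a *: rho + c *: omega) x y lt_jn =
  a *: dstate Pi E rho x y lt_jn + c *: dstate Pi E omega x y lt_jn.
Proof.
elim: j lt_jn => [|j IHj] lt_jn /=.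
  by rewrite mulmxDr mulmxDl -!scalemxAr -!scalemxAl.
by rewrite IHj linearP linearZ /= mulmxDr mulmxDl -!scalemxAr -!scalemxAl.
Qed.

Lemma QKD_right_comb b :
  QKD_right n Pi E (a *: rho + c *: omega) b =
  a * QKD_right n Pi E rho b + c * QKD_right n Pi E omega b.
Proof. by rewrite /QKD_right rstate_comb mxtraceD !mxtraceZ. Qed.

Lemma QKD_left_comb b :
  QKD_left n Pi E (a *: rho + c *: omega) b =
  a * QKD_left n Pi E rho b + c * QKD_left n Pi E omega b.
Proof. by rewrite /QKD_left lstate_comb mxtraceD !mxtraceZ. Qed.

Lemma QKD_doubled_comb ab :
  QKD_doubled n Pi E (a *: rho + c *: omega) ab =
  a * QKD_doubled n Pi E rho ab + c * QKD_doubled n Pi E omega ab.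
Proof. by rewrite /QKD_doubled dstate_comb mxtraceD !mxtraceZ. Qed.

End KDLinearity.

Theorem mainTheorem7 (R : realType) (n : nat) (d : nat -> nat)
    (O : nat -> finType) (Pi : forall j, O j -> 'M[R[i]]_(d j))
    (E : forall j, {linear 'M[R[i]]_(d j) -> 'M[R[i]]_(d j.+1)}) :
  process_ok n Pi E ->
  forall (rho omega : 'M[R[i]]_(d 0)) (lam : R[i]),
    density rho -> density omega -> 0 <= lam <= 1 ->
    let mix := lam *: rho + (1 - lam) *: omega in
    [/\ nonclass (QKD_right n Pi E mix)
          <= lam * nonclass (QKD_right n Pi E rho)
             + (1 - lam) * nonclass (QKD_right n Pi E omega),
        nonclass (QKD_left n Pi E mix)
          <= lam * nonclass (QKD_left n Pi E rho)
             + (1 - lam) * nonclass (QKD_left n Pi E omega)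
      & nonclass (QKD_doubled n Pi E mix)
          <= lam * nonclass (QKD_doubled n Pi E rho)
             + (1 - lam) * nonclass (QKD_doubled n Pi E omega)].
Proof.
move=> _ rho omega lam _ _ lam01 mix.
split; apply: nonclass_convex => // x.
- by rewrite /mix QKD_right_comb.
- by rewrite /mix QKD_left_comb.
- by rewrite /mix QKD_doubled_comb.
Qed.
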